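(* Fix integers $k\ge 3$ and $r\ge 1$. For $n\ge 0$ let $c_n$ be the number of words on $[n]^r$ that avoid both $123$ and $1k(k-1)\cdots 2$. Then the sequence $(c_n)_{n\ge0}$ satisfies a linear recurrence with constant coefficients; equivalently, $\sum_{n\ge 0} c_n x^n$ is a rational function of $x$.
   Context: A word on $[n]^r$ is a word in which each letter $1,2,\dots,n$ appears exactly $r$ times and no other letter appears (for $r=1$ these are the permutations of $[n]$). A word $w_1\cdots w_m$ contains a pattern $p_1\cdots p_k$ if there are indices $i_1<\dots<i_k$ such that for all $r,s$: $w_{i_r}<w_{i_s}\iff p_r<p_s$ and $w_{i_r}>w_{i_s}\iff p_r>p_s$; otherwise it avoids it. The pattern $1k(k-1)\cdots 2$ is $1$ followed by $k,k-1,\dots,2$. *)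

From HB Require Import structures.
From mathcomp Require Import all_boot all_order all_algebra.
Set Implicit Arguments. Unset Strict Implicit. Unset Printing Implicit Defensive.

Definition is_word (n r : nat) (w : seq nat) : bool :=
  all (fun x => (0 < x) && (x <= n)) w &&
  all (fun i => count_mem i w == r) (iota 1 n).

Definition order_iso (u p : seq nat) : bool :=
  (size u == size p) &&
  [forall i : 'I_(size p), forall j : 'I_(size p),
     ((nth 0 u i < nth 0 u j) == (nth 0 p i < nth 0 p j)) &&
     ((nth 0 u i > nth 0 u j) == (nth 0 p i > nth 0 p j))].

Definition contains (w p : seq nat) : bool :=
  [exists m : (size w).-tuple bool, order_iso (mask m w) p].

Definition avoids (w p : seq nat) : bool := ~~ contains w p.

Definition pat123 : seq nat := [:: 1; 2; 3].
Definition pat1k (k : nat) : seq nat := 1 :: rev (iota 2 k.-1).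

(* c_n: number of words on [n]^r avoiding 123 and 1k(k-1)...2.
   Words of length n*r with letters in {0..n} are enumerated as tuples over 'I_n.+1. *)
Definition c_seq (k r n : nat) : nat :=
  #|[pred t : (n * r).-tuple 'I_n.+1 |
     let w := map (@nat_of_ord _) t in
     [&& is_word n r w, avoids w pat123 & avoids w (pat1k k)]]|.

From HB Require Import structures.
From mathcomp Require Import all_boot all_order all_algebra.
From mathcomp Require Import zify.
Set Implicit Arguments. Unset Strict Implicit. Unset Printing Implicit Defensive.

(* Read words backwards: [w] avoids [123] and [1 k (k-1) ... 2] iff [rev w]
   avoids [321] and [2 3 ... k 1].  A valid reversed word on [[n+1]^r] arises
   in exactly one way from one on [[n]^r]: raise every letter by one, put the
   last of the [r] new ones after a prefix of length [L], and the other [r-1]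
   anywhere inside that prefix.  The result is valid iff the old word is and
   its length-[L] prefix is weakly increasing with at most [k-2] distinct
   letters.  The admissible [L] only depend on the lengths of the first [k-2]
   runs of equal letters of the old word, each at most [r], and these run
   lengths for the new word only depend on the old ones and on the insertion
   pattern.  So the numbers of words in each of these finitely many states
   evolve by a fixed transfer matrix, and Cayley-Hamilton turns this into a
   linear recurrence for their sum [c_n]. *)

Lemma all_take (T : eqType) (P : pred T) n (s : seq T) : all P s -> all P (take n s).
Proof. by move/allP=> H; apply/allP => x /mem_take /H. Qed.

Lemma all_drop (T : eqType) (P : pred T) n (s : seq T) : all P s -> all P (drop n s).
Proof. by move/allP=> H; apply/allP => x /mem_drop /H. Qed.

Lemma sumn_take j R : sumn (take j R) <= sumn R.
Proof. by rewrite -{2}(cat_take_drop j R) sumn_cat leq_addr. Qed.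

Lemma nseq_cons_cat (T : Type) t (x : T) u : nseq t x ++ x :: u = nseq t.+1 x ++ u.
Proof. by elim: t => //= t ->. Qed.

(** * Runs of the weakly increasing prefix *)

Definition bump_head (l : seq nat) : seq nat :=
  if l is a :: l' then a.+1 :: l' else [:: 1].

(* [asc_runs v] lists the lengths of the maximal blocks of equal letters
   of the longest weakly increasing prefix of [v]. *)
Fixpoint asc_runs (v : seq nat) : seq nat :=
  match v with
  | [::] => [::]
  | x :: t => match t with
              | [::] => [:: 1]
              | y :: _ => if x == y then bump_head (asc_runs t)
                          else if x < y then 1 :: asc_runs t else [:: 1]
              end
  end.

Lemma asc_runs_cons2 x y t : asc_runs [:: x, y & t] =
  if x == y then bump_head (asc_runs (y :: t))
  else if x < y then 1 :: asc_runs (y :: t) else [:: 1].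
Proof. by []. Qed.
Arguments asc_runs : simpl never.

(* [take_runs g R] is the run list of the first [g] letters of a word
   whose run list is [R]. *)
Fixpoint take_runs (g : nat) (R : seq nat) {struct R} : seq nat :=
  match g, R with
  | 0, _ | _, [::] => [::]
  | g'.+1, a :: R' => if g'.+1 <= a then [:: g'.+1] else a :: take_runs (g'.+1 - a) R'
  end.

Lemma take_runs0 R : take_runs 0 R = [::]. Proof. by case: R. Qed.

Lemma asc_runs_gt0 v : all (leq 1) (asc_runs v).
Proof.
elim: v => [|x [|y t] IH] //; rewrite asc_runs_cons2.
case: eqP => _; last by case: ifP.
by case: (asc_runs (y :: t)) IH => //= a l /andP[_ ->].
Qed.

Lemma asc_runs_eq0 v : (asc_runs v == [::]) = (v == [::]).
Proof.
case: v => [|x [|y t]] //; rewrite asc_runs_cons2.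
by case: (x == y); [case: (asc_runs _)|case: (x < y)].
Qed.

Lemma sumn_asc_runs v : sumn (asc_runs v) <= size v.
Proof.
elim: v => [|x [|y t] IH] //=; rewrite asc_runs_cons2 /= in IH *.
case: eqP => _; last by case: ifP => _ /=; lia.
by case: (asc_runs (y :: t)) IH => //= a l; lia.
Qed.

Lemma sorted_take_asc_runs u L : L <= size u ->
  sorted leq (take L u) = (L <= sumn (asc_runs u)).
Proof.
elim: u L => [|x [|y t] IH] [|[|L]] //= HL; rewrite asc_runs_cons2.
  case: eqP => _; first by move: (asc_runs_gt0 (y :: t)); case: (asc_runs _).
  by case: ifP.
have := IH L.+1 HL; rewrite take_cons /= => ->.
case: eqP => [->|Hne].
  by have := asc_runs_gt0 (y :: t); case: (asc_runs _) => [|a l] _ /=; rewrite leqnn; lia.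
case Hxy: (x < y) => /=; first by rewrite ltnW //=; lia.
by have -> : (x <= y) = false by apply/negbTE; move/eqP: Hne; lia.
Qed.

Lemma size_undup_sorted s : sorted leq s -> size (undup s) = size (asc_runs s).
Proof.
elim: s => [|x [|y t] IH] //= /andP[Hxy Hs]; rewrite asc_runs_cons2.
case: eqP => [->|Hne].
  rewrite inE eqxx /= IH //.
  by have := asc_runs_eq0 (y :: t); case: (asc_runs _).
have Hlt : x < y by move/eqP: Hne; lia.
have Hall : all (leq y) t := order_path_min leq_trans Hs.
have Hx : x \notin y :: t.
  rewrite inE negb_or (ltn_eqF Hlt); apply/negP => /(allP Hall); lia.
by rewrite Hlt (negbTE Hx) /= IH.
Qed.

Lemma bump_head_take_runs g R : 0 < g -> R != [::] ->
  bump_head (take_runs g R) = take_runs g.+1 (bump_head R).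
Proof.
case: g R => [|g] [|a R] //= _ _.
by case: ifP => H; rewrite ltnS H ?subSS.
Qed.

Lemma asc_runs_take u L : L <= sumn (asc_runs u) ->
  asc_runs (take L u) = take_runs L (asc_runs u).
Proof.
elim: u L => [|x [|y t] IH] [|[|L]] //= HL; rewrite ?take_runs0 //.
- by have := asc_runs_gt0 (x :: y :: t); move: HL;
    case: (asc_runs _) => [|a l] //= _ /andP[->].
rewrite asc_runs_cons2; move: HL; rewrite asc_runs_cons2.
have -> : y :: take L t = take L.+1 (y :: t) by [].
case: eqP => [_|_].
  have := asc_runs_gt0 (y :: t); have := asc_runs_eq0 (y :: t).
  case E: (asc_runs (y :: t)) => [|a l] // _ _ HL.
  by rewrite (IH L.+1) ?E ?bump_head_take_runs //=; move: HL => /=; lia.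
case: (x < y) => HL //=.
by rewrite (IH L.+1) /= ?subn1 //; move: HL => /=; lia.
Qed.

Lemma size_take_runs R L j : all (leq 1) R -> L <= sumn R ->
  (size (take_runs L R) <= j) = (L <= sumn (take j R)).
Proof.
elim: R L j => [|a R IH] [|L] [|j] //= /andP[Ha HR] HL; rewrite ?leqn0 //.
  by case: ifP.
case: ifP => H /=; first by apply/esym; apply: leq_trans H (leq_addr _ _).
by rewrite ltnS IH //; move/negbT: H; lia.
Qed.

Lemma take_runs_take R L j : L <= sumn (take j R) -> take_runs L R = take_runs L (take j R).
Proof.
elim: R L j => [|a R IH] [|L] [|j] //=; rewrite ?leqn0 // => HL.
by case: ifP => H //; rewrite (IH _ j) //; move/negbT: H; lia.
Qed.

Lemma take_runs_bounded r g R :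
  all (fun a => a <= r) R -> all (fun a => a <= r) (take_runs g R).
Proof.
elim: R g => [|a R IH] [|g] //= /andP[Ha HR].
by case: ifP => H /=; rewrite ?IH ?Ha //; lia.
Qed.

Lemma asc_runs_ones n s : (if s is y :: _ then 1 < y else true) ->
  asc_runs (nseq n.+1 1 ++ s) = n.+1 :: asc_runs s.
Proof.
move=> Hs; elim: n => [|n IH].
  case: s Hs => [|y s] //= Hy.
  by rewrite asc_runs_cons2 (ltn_eqF Hy) Hy.
by rewrite /= asc_runs_cons2 eqxx -/(nseq n.+1 1 ++ s) IH.
Qed.

Lemma asc_runs_cut x s y z : y < last x s -> asc_runs ((x :: s) ++ y :: z) = asc_runs (x :: s).
Proof.
elim: s x => [|x2 s IH] x /= Hy.
  by rewrite asc_runs_cons2 (gtn_eqF Hy) ltnNge (ltnW Hy).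
by rewrite asc_runs_cons2 [in RHS]asc_runs_cons2 -cat_cons IH.
Qed.

Definition good_prefix (k : nat) (s : seq nat) : bool :=
  sorted leq s && (size (undup s) <= k - 2).

Definition run_state (k : nat) (v : seq nat) : seq nat := take (k - 2) (asc_runs v).

Definition good_len (k : nat) (u : seq nat) : nat := sumn (run_state k u).

Lemma good_len_size k u : good_len k u <= size u.
Proof. exact: leq_trans (sumn_take _ _) (sumn_asc_runs u). Qed.

Lemma good_prefix_take k u L : L <= size u ->
  good_prefix k (take L u) = (L <= good_len k u).
Proof.
move=> HL; rewrite /good_prefix /good_len /run_state sorted_take_asc_runs //.
case: (leqP L (sumn (asc_runs u))) => H /=.
  rewrite size_undup_sorted ?sorted_take_asc_runs //.
  by rewrite asc_runs_take // size_take_runs // asc_runs_gt0.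
by apply/esym/negbTE; rewrite -ltnNge; exact: leq_ltn_trans (sumn_take _ _) H.
Qed.

(** * Inserting the letter 1 *)

Fixpoint interleave1 (b : seq bool) (s : seq nat) : seq nat :=
  match b, s with
  | [::], _ => s
  | true :: b', _ => 1 :: interleave1 b' s
  | false :: b', [::] => interleave1 b' [::]
  | false :: b', x :: s' => x :: interleave1 b' s'
  end.

Definition insert1 (u : seq nat) (L : nat) (b : seq bool) : seq nat :=
  interleave1 b (take L u) ++ 1 :: drop L u.

Lemma interleave1_ones t b s : interleave1 (nseq t true ++ b) s = nseq t 1 ++ interleave1 b s.
Proof. by elim: t => //= t ->. Qed.

Lemma interleave1_letters g b s : g <= size s ->
  interleave1 (nseq g false ++ b) s = take g s ++ interleave1 b (drop g s).
Proof. by elim: g s => [|g IH] [|x s] //= Hg; rewrite IH. Qed.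

Lemma filter_interleave1 b s : all (predC1 1) s -> count negb b = size s ->
  filter (predC1 1) (interleave1 b s) = s.
Proof.
elim: b s => [|[] b IH] [|x s] //= Hs; try by move=> Hc; rewrite IH.
by case/andP: Hs => /= Hx Hs [Hc]; rewrite Hx IH.
Qed.

Lemma map_interleave1 b s : all (predC1 1) s -> count negb b = size s ->
  map (pred1 1) (interleave1 b s) = b.
Proof.
elim: b s => [|[] b IH] [|x s] //= Hs; try by move=> Hc; rewrite IH.
by case/andP: Hs => /= /negbTE Hx Hs [Hc]; rewrite Hx IH.
Qed.

Lemma interleave1_split v : interleave1 (map (pred1 1) v) (filter (predC1 1) v) = v.
Proof. by elim: v => [|x v IH] //=; case: eqP => [->|_] /=; rewrite IH. Qed.

Lemma perm_interleave1 b s : count negb b = size s ->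
  perm_eq (interleave1 b s) (nseq (count id b) 1 ++ s).
Proof.
elim: b s => [|[] b IH] [|x s] //= Hc; rewrite ?perm_cons ?IH //.
by rewrite add0n perm_sym -cat1s perm_catCA /= perm_cons perm_sym IH //; case: Hc.
Qed.

Lemma perm_insert1 u L b : count negb b = L -> L <= size u ->
  perm_eq (insert1 u L b) (nseq (count id b).+1 1 ++ u).
Proof.
move=> Hb HL; rewrite /insert1 -nseq_cons_cat.
apply: (@perm_trans _ ((nseq (count id b) 1 ++ take L u) ++ 1 :: drop L u)).
  by rewrite perm_cat2r perm_interleave1 // size_takel.
rewrite -catA perm_cat2l -[X in perm_eq _ (1 :: X)](cat_take_drop L u).
by rewrite -cat1s perm_catCA.
Qed.

Fixpoint lead_count (c : bool) (b : seq bool) : nat :=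
  if b is x :: b' then (if x == c then (lead_count c b').+1 else 0) else 0.

Lemma lead_countE c b : b = nseq (lead_count c b) c ++ drop (lead_count c b) b.
Proof. by elim: b => [|x b IH] //=; case: eqP => [->|_] //=; rewrite -IH. Qed.

Lemma lead_count_next c b : if drop (lead_count c b) b is x :: _ then x != c else true.
Proof. by elim: b => [|x b IH] //=; case: eqP => [->|/eqP]. Qed.

Lemma lead_count_le c b : lead_count c b <= count (pred1 c) b.
Proof. by elim: b => [|x b IH] //=; case: (x == c); rewrite /= ?add1n. Qed.

(* After the insertion the word starts with [t] ones, then [g] old letters
   (from the weakly increasing prefix), then a 1 that ends the increasing
   prefix; if [g = 0] it is [t+1] ones followed by the old word. *)
Definition next_runs (b : seq bool) (R : seq nat) : seq nat :=
  let t := lead_count true b in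
  let g := lead_count false (drop t b) in
  if g == 0 then t.+1 :: R
  else if t == 0 then take_runs g R else t :: take_runs g R.

Lemma asc_runs_insert1 u L b : all (leq 2) u -> count negb b = L ->
  L <= sumn (asc_runs u) -> asc_runs (insert1 u L b) = next_runs b (asc_runs u).
Proof.
move=> Hu Hb HL; have HLs : L <= size u := leq_trans HL (sumn_asc_runs u).
rewrite /next_runs; set t := lead_count true b; set b1 := drop t b.
set g := lead_count false b1; set b2 := drop g b1.
have Eb : b = nseq t true ++ nseq g false ++ b2 by rewrite -lead_countE -lead_countE.
have Hb1 := lead_count_next true b; have Hb2 := lead_count_next false b1.
rewrite -/t -/b1 in Hb1; rewrite -/g -/b2 in Hb2.
have HcL : L = g + count negb b2 by rewrite -Hb Eb !count_cat !count_nseq /=; lia.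
rewrite /insert1 Eb interleave1_ones.
have Hu1 v : all (leq 2) v -> if v is y :: _ then 1 < y else true by case: v => //= ? ? /andP[].
case: eqP => Hg0.
  have Eb1 : b1 = [::] by move: Hb1 Hb2; rewrite /b2 Hg0 drop0; case: (b1) => [|[] ?].
  have HL0 : L = 0 by rewrite HcL /b2 Hg0 drop0 Eb1.
  by rewrite /b2 Eb1 Hg0 drop0 HL0 take0 drop0 /= -catA /= nseq_cons_cat asc_runs_ones ?Hu1.
have Hgl : g <= L by lia.
rewrite interleave1_letters ?size_takel // take_takel // -!catA.
have [z ->] : exists z, interleave1 b2 (drop g (take L u)) ++ 1 :: drop L u = 1 :: z.
  case: (b2) Hb2 HcL => [_ /= HLg|[] b3 //= _ _]; last by eexists.
  by rewrite HLg addn0 in HLs *; rewrite drop_oversize ?size_takel //=; eexists.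
have Hallg : all (leq 2) (take g u) := all_take g Hu.
have Hsz : size (take g u) = g by rewrite size_takel //; lia.
case Etg: (take g u) Hallg Hsz => [|x s'] Hallg Hsz; first by move/eqP: Hg0; rewrite -Hsz.
have Hcut : asc_runs ((x :: s') ++ 1 :: z) = take_runs g (asc_runs u).
  rewrite asc_runs_cut; last by apply: (allP Hallg); exact: mem_last.
  by rewrite -Etg asc_runs_take //; exact: leq_trans Hgl HL.
case: (t) => [|t'] //=.
by rewrite asc_runs_ones ?Hcut //=; case/andP: Hallg.
Qed.

Definition next_state (k : nat) (b : seq bool) (S : seq nat) : seq nat :=
  take (k - 2) (next_runs b S).

Lemma next_state_bounded k r b S : 0 < r -> count id b = r.-1 ->
  all (fun a => a <= r) S -> all (fun a => a <= r) (next_state k b S).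
Proof.
move=> Hr Hb HS; apply: all_take; rewrite /next_runs.
have Ht : lead_count true b < r.
  have -> : r = (count id b).+1 by rewrite Hb prednK.
  by rewrite ltnS (leq_trans (lead_count_le _ _)) //; apply/eq_leq/eq_count => -[].
by case: ifP => _; [|case: ifP => _]; rewrite /= ?take_runs_bounded ?HS //; lia.
Qed.

Lemma run_state_insert1 k u L b : 2 < k -> all (leq 2) u -> count negb b = L ->
  L <= good_len k u -> run_state k (insert1 u L b) = next_state k b (run_state k u).
Proof.
move=> Hk Hu Hb HL; have HLr : L <= sumn (asc_runs u) := leq_trans HL (sumn_take _ _).
rewrite /run_state /next_state asc_runs_insert1 // /next_runs.
case: eqP => _; first by case Ek: (k - 2) => [|j]; [lia | rewrite /= take_takel].
have Hg : lead_count false (drop (lead_count true b) b) <= L.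
  apply: leq_trans (lead_count_le _ _) _; rewrite -Hb (@eq_count _ _ negb) => [|[]] //.
  by rewrite -[in X in _ <= X](cat_take_drop (lead_count true b) b) count_cat leq_addl.
by rewrite -take_runs_take //; exact: leq_trans Hg HL.
Qed.

(** * Patterns in reversed words *)

Lemma containsP w p : reflect (exists s, subseq s w /\ order_iso s p) (contains w p).
Proof.
apply: (iffP existsP) => [[m Hm] | [s [/subseqP [m Hsz ->] Hiso]]].
  by exists (mask m w); split; [exact: mask_subseq | done].
have Hsz' : size m == size w by apply/eqP.
by exists (Tuple Hsz').
Qed.

Lemma contains_rev v p :
  contains (rev v) p <-> exists s, subseq s v /\ order_iso (rev s) p.
Proof.
split => [/containsP [s [Hs Hi]] | [s [Hs Hi]]].
  by exists (rev s); rewrite revK -subseq_rev revK.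
by apply/containsP; exists (rev s); rewrite subseq_rev.
Qed.

Lemma order_iso_ltn t p i j : order_iso t p -> i < size p -> j < size p ->
  (nth 0 t i < nth 0 t j) = (nth 0 p i < nth 0 p j).
Proof.
move=> /andP[_ /forallP H] Hi Hj.
by have /forallP /(_ (Ordinal Hj)) /andP [/eqP -> _] := H (Ordinal Hi).
Qed.

Lemma order_isoI t p : size t = size p ->
  (forall i j, i < size p -> j < size p ->
     (nth 0 t i < nth 0 t j) = (nth 0 p i < nth 0 p j)) ->
  order_iso t p.
Proof.
move=> Hs H; rewrite /order_iso Hs eqxx /=.
by apply/forallP => i; apply/forallP => j; rewrite !H //; apply/andP.
Qed.

Lemma order_iso_map_succ s p : order_iso (map succn s) p = order_iso s p.
Proof.
rewrite /order_iso size_map; case: eqP => //= Es.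
apply: eq_forallb => i; apply: eq_forallb => j.
by rewrite !(nth_map 0) ?Es // !ltnS.
Qed.

Lemma contains_map_succ w p : contains (map succn w) p = contains w p.
Proof.
apply/containsP/containsP => [[s [/subseqP [m Hm Es] Hi]] | [s [Hs Hi]]].
  rewrite -map_mask in Es; exists (mask m w).
  by rewrite mask_subseq -order_iso_map_succ -Es.
by exists (map succn s); rewrite map_subseq // order_iso_map_succ.
Qed.

Lemma ltn_nth_sorted t i j : sorted ltn t -> i < size t -> j < size t ->
  (nth 0 t i < nth 0 t j) = (i < j).
Proof.
move=> Hs Hi Hj; have Hm := sorted_ltn_nth ltn_trans 0 Hs.
case: (ltngtP i j) => [H|H|->]; rewrite ?ltnn //; first by apply: Hm.
by apply/negbTE; rewrite -leqNgt ltnW //; apply: Hm.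
Qed.

(* The shape of [1 k (k-1) ... 2]: a first letter below a strictly
   decreasing tail. *)
Definition low_then_dec (t : seq nat) : bool :=
  if t is x :: xs then sorted gtn xs && all (fun z => x < z) xs else false.

Lemma low_then_dec_ltn t i j : low_then_dec t -> i < size t -> j < size t ->
  (nth 0 t i < nth 0 t j) = ((i == 0) && (j != 0)) || ((0 < j) && (j < i)).
Proof.
case: t => [|x xs] //= /andP[Hs Ha] Hi Hj.
have Hm := sorted_ltn_nth (fun _ _ _ H1 H2 => ltn_trans H2 H1) 0 Hs.
case: i Hi => [|i] Hi; case: j Hj => [|j] Hj /=; rewrite ?ltnn //.
- by rewrite (allP Ha) // mem_nth.
- by apply/negbTE; rewrite -leqNgt ltnW // (allP Ha) // mem_nth.
rewrite !ltnS in Hi Hj *.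
case: (ltngtP i j) => [H|H|->]; rewrite ?ltnn //; last by apply: Hm.
by apply/negbTE; rewrite -leqNgt ltnW //; apply: Hm.
Qed.

Lemma low_then_dec_order_iso t p : size t = size p ->
  low_then_dec t -> low_then_dec p -> order_iso t p.
Proof.
move=> Hs Ht Hp; apply: order_isoI => // i j Hi Hj.
by rewrite !low_then_dec_ltn // Hs.
Qed.

Lemma order_iso_low_then_dec t p : order_iso t p -> low_then_dec p -> low_then_dec t.
Proof.
move=> Hi Hp; have /eqP Hsz : size t == size p by case/andP: Hi.
case: t Hi Hsz => [|x xs] Hi Hsz; first by case: p Hp Hsz Hi.
have Hlt i j : i < size p -> j < size p -> (nth 0 (x :: xs) i < nth 0 (x :: xs) j) =
    ((i == 0) && (j != 0)) || ((0 < j) && (j < i)).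
  by move=> Hi' Hj'; rewrite (order_iso_ltn Hi) // low_then_dec_ltn.
apply/andP; split.
  apply/(sortedP 0) => i Hi1.
  by have := Hlt i.+2 i.+1; rewrite -Hsz /=; lia.
by apply/(all_nthP 0) => j Hj; have := Hlt 0 j.+1; rewrite -Hsz /=; lia.
Qed.

Lemma low_then_dec_pat1k k : 1 < k -> low_then_dec (pat1k k).
Proof.
move=> Hk; rewrite /= rev_sorted iota_ltn_sorted all_rev.
by apply/allP => z; rewrite mem_iota; lia.
Qed.

Lemma size_pat1k k : 0 < k -> size (pat1k k) = k.
Proof. by move=> Hk; rewrite /= size_rev size_iota; lia. Qed.

Definition has321 (v : seq nat) : Prop :=
  exists a b c, [/\ a < b, b < c & subseq [:: c; b; a] v].

Definition has23k1 (k : nat) (v : seq nat) : Prop :=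
  exists a zs, [/\ size zs = k.-1, sorted ltn zs, all (fun z => a < z) zs
                  & subseq (rcons zs a) v].

Lemma contains_rev_pat123 v : contains (rev v) pat123 <-> has321 v.
Proof.
rewrite contains_rev; split => [[s [Hs Hi]] | [a [b [c [Hab Hbc Hs]]]]].
  have Hsz : size (rev s) = 3 by case/andP: Hi => /eqP.
  rewrite -[s]revK in Hs; move: (rev s) Hsz Hs Hi => [|a [|b [|c [|? ?]]]] //= _ Hs Hi.
  exists a, b, c; split; last by move: Hs; rewrite /rev.
    by have := @order_iso_ltn _ _ 0 1 Hi isT isT.
  by have := @order_iso_ltn _ _ 1 2 Hi isT isT.
exists [:: c; b; a]; split => //; apply: order_isoI => // i j Hi Hj.
rewrite (@ltn_nth_sorted [:: a; b; c]) //=; last by rewrite Hab Hbc.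
by rewrite (@ltn_nth_sorted [:: 1; 2; 3]).
Qed.

Lemma contains_rev_pat1k k v : 1 < k -> contains (rev v) (pat1k k) <-> has23k1 k v.
Proof.
move=> Hk; rewrite contains_rev; split => [[s [Hs Hi]] | [a [zs [Hsz Hsort Hall Hs]]]].
  have Hsz : size (rev s) = k by case/andP: Hi => /eqP ->; rewrite size_pat1k //; lia.
  have := order_iso_low_then_dec Hi (low_then_dec_pat1k Hk).
  rewrite -[s]revK in Hs; move: (rev s) Hsz Hs => [|a ys] //= Hsz Hs /andP[Hsort Hall].
  exists a, (rev ys); rewrite size_rev rev_sorted all_rev -rev_cons; split => //; lia.
exists (rcons zs a); split => //; apply: low_then_dec_order_iso; last exact: low_then_dec_pat1k.
  by rewrite size_rev size_rcons size_pat1k; lia.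
by rewrite rev_rcons /= all_rev Hall andbT rev_sorted.
Qed.

(** * Avoidance under insertion *)

Lemma subseq_rcons_notin (T : eqType) (s : seq T) x p q : x \notin q ->
  subseq (rcons s x) (p ++ x :: q) -> subseq s p.
Proof.
rewrite -mem_rev -subseq_rev rev_rcons rev_cat rev_cons -cats1 -catA -(subseq_rev s).
elim: (rev q) => [|y t IH] /=; first by rewrite eqxx.
by rewrite inE negb_or => /andP[/negbTE -> /IH].
Qed.

Lemma sorted_leq_pairs s : (forall c b, subseq [:: c; b] s -> c <= b) -> sorted leq s.
Proof.
elim: s => [|x [|y t] IH] H //=; apply/andP; split.
  by apply: H; rewrite /= eqxx /= eqxx sub0seq.
by apply: IH => c b Hs; apply: H; exact: subseq_trans Hs (subseq_cons _ _).
Qed.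

Lemma notin1_drop u L : all (leq 2) u -> 1 \notin drop L u.
Proof. by move=> Hu; apply/negP => /mem_drop /(allP Hu). Qed.

Section Insertion.
Variables (u : seq nat) (L : nat) (b : seq bool).
Hypotheses (Hu : all (leq 2) u) (Hb : count negb b = L) (HL : L <= size u).

Let Hu1 : all (predC1 1) u. Proof. by apply: sub_all Hu => x /=; lia. Qed.

Lemma filter_interleave1_take : filter (predC1 1) (interleave1 b (take L u)) = take L u.
Proof. by rewrite filter_interleave1 ?all_take ?size_takel. Qed.

Lemma filter_insert1 : filter (predC1 1) (insert1 u L b) = u.
Proof.
rewrite /insert1 filter_cat filter_interleave1_take /=.
by move/all_filterP: (all_drop L Hu1) => ->; rewrite cat_take_drop.
Qed.

Lemma insert1_letter x : x \in insert1 u L b -> x != 1 -> 1 < x.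
Proof.
rewrite (perm_mem (perm_insert1 Hb HL)) mem_cat => /orP[/nseqP [-> _] //|/(allP Hu)].
by rewrite -[2]/(1.+1).
Qed.

Lemma subseq_insert1 s : all (predC1 1) s -> subseq s (insert1 u L b) -> subseq s u.
Proof. by move=> Hs Hsub; rewrite -filter_insert1 subseq_filter Hs. Qed.

Lemma subseq_rcons1_insert1 s : all (predC1 1) s ->
  subseq (rcons s 1) (insert1 u L b) -> subseq s (take L u).
Proof.
move=> Hs /(subseq_rcons_notin (notin1_drop L Hu)) Hsub.
by rewrite -filter_interleave1_take subseq_filter Hs.
Qed.

(* An occurrence of either pattern in the new word either avoids the letter 1,
   and then lies in [u], or uses a 1 as its last and smallest letter, and then
   its other letters lie in the prefix [take L u]. *)
Lemma insert1_avoids321 : ~ has321 u -> sorted leq (take L u) -> ~ has321 (insert1 u L b).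
Proof.
move=> N3 Hsort [a [b' [c [Hab Hbc Hs]]]].
have Ha : a \in insert1 u L b by apply: (mem_subseq Hs); rewrite !inE eqxx !orbT.
case: (eqVneq a 1) => [Ea1|/(insert1_letter Ha) Ha1].
  have Hcb : all (predC1 1) [:: c; b'] by rewrite /= !andbT; apply/andP; split; apply/eqP; lia.
  have := subseq_rcons1_insert1 Hcb; rewrite -Ea1 => /(_ Hs).
  by move/(subseq_sorted leq_trans)/(_ Hsort) => /=; lia.
apply: N3; exists a, b', c; split => //; apply: subseq_insert1 Hs.
by apply/and4P; split => //; apply/eqP; lia.
Qed.

Lemma insert1_avoids23k1 k : 1 < k -> ~ has23k1 k u ->
  size (undup (take L u)) <= k - 2 -> ~ has23k1 k (insert1 u L b).
Proof.
move=> Hk Nk Hund [a [zs [Hsz Hzs Hall Hs]]].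
have Ha : a \in insert1 u L b by apply: (mem_subseq Hs); rewrite mem_rcons inE eqxx.
case: (eqVneq a 1) => [Ea1|/(insert1_letter Ha) Ha1].
  have Hzs1 : all (predC1 1) zs by apply: sub_all Hall => z /=; rewrite Ea1; lia.
  have := subseq_rcons1_insert1 Hzs1; rewrite -Ea1 => /(_ Hs) Hsub.
  have Huq : uniq zs by move: Hzs; rewrite ltn_sorted_uniq_leq => /andP[].
  have : {subset zs <= undup (take L u)}.
    by move=> z Hz; rewrite mem_undup (mem_subseq Hsub Hz).
  by move/(uniq_leq_size Huq); rewrite Hsz; lia.
apply: Nk; exists a, zs; split => //; rewrite subseq_insert1 // all_rcons /= (gtn_eqF Ha1).
by apply: sub_all Hall => z /=; lia.
Qed.

Lemma insert1_avoids_inv k : ~ has321 (insert1 u L b) -> ~ has23k1 k (insert1 u L b) ->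
  [/\ ~ has321 u, ~ has23k1 k u & good_prefix k (take L u)].
Proof.
move=> N3 Nk.
have Hsub : subseq u (insert1 u L b) by rewrite -[X in subseq X _]filter_insert1 filter_subseq.
have Hpre : subseq (take L u) (interleave1 b (take L u)).
  by rewrite -[X in subseq X _]filter_interleave1_take filter_subseq.
have Hpre1 s : subseq s (take L u) -> subseq (rcons s 1) (insert1 u L b).
  move=> Hs; rewrite -cats1 /insert1 cat_subseq ?(subseq_trans Hs Hpre) //.
  by rewrite -cat1s prefix_subseq.
have Hgt1 : all (leq 2) (take L u) := all_take L Hu.
split.
- move=> [a [b' [c [? ? Hs]]]]; apply: N3; exists a, b', c.
  by split => //; exact: subseq_trans Hsub.
- move=> [a [zs [? ? ? Hs]]]; apply: Nk; exists a, zs.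
  by split => //; exact: subseq_trans Hsub.
have Hsort : sorted leq (take L u).
  apply: sorted_leq_pairs => c b' Hs; rewrite leqNgt; apply/negP => Hlt; apply: N3.
  exists 1, b', c; split; [|done|exact: (Hpre1 [:: c; b'])].
  by apply: (allP Hgt1); apply: (mem_subseq Hs); rewrite !inE eqxx orbT.
rewrite /good_prefix Hsort leqNgt; apply/negP => Hgt; apply: Nk.
exists 1, (take k.-1 (undup (take L u))); split.
- by rewrite size_takel //; apply: leq_trans Hgt; lia.
- apply: take_sorted; rewrite ltn_sorted_uniq_leq undup_uniq /=.
  exact: (subseq_sorted leq_trans (undup_subseq _) Hsort).
- by apply/allP => z /mem_take; rewrite mem_undup => /(allP Hgt1).
by apply: Hpre1; exact: subseq_trans (take_subseq _ _) (undup_subseq _).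
Qed.

End Insertion.

(** * Words of [[n+1]^r] from words of [[n]^r] *)

Lemma is_word_perm n r s1 s2 : perm_eq s1 s2 -> is_word n r s1 = is_word n r s2.
Proof.
move=> H; rewrite /is_word (perm_all _ H); congr (_ && _).
by apply: eq_all => i; move/permP: H => ->.
Qed.

Lemma is_word_gt0 n r v : is_word n r v -> all (leq 1) v.
Proof. by case/andP=> H _; apply: sub_all H => x /andP[]. Qed.

Lemma is_word_succ n r v : 0 < r ->
  is_word n.+1 r (nseq r 1 ++ map succn v) = is_word n r v.
Proof.
move=> Hr; have Eiota : iota 1 n.+1 = 1 :: map succn (iota 1 n) by rewrite /= (iotaDl 1 1).
have Ecount i : count (preim succn (pred1 i.+1)) v = count_mem i v by apply: eq_count.
rewrite /is_word all_cat Eiota all_map /= all_map count_cat count_map count_nseq /= Ecount mul1n.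
have -> : all (fun x => 0 < x <= n.+1) (nseq r 1) by apply/allP => x /nseqP [-> _].
have -> : all (fun x => 0 < x <= n) v = all (fun x => x <= n) v && (count_mem 0 v == 0).
  by elim: v {Ecount} => [|[|x] v IH] //=; rewrite ?andbF // IH add0n andbA.
rewrite -{2}(addn0 r) eqn_add2l /= andbA; congr (_ && _).
apply: eq_in_all => i; rewrite mem_iota => /andP[Hi _] /=.
by rewrite count_cat count_nseq count_map Ecount /= eqSS (ltn_eqF Hi) mul0n.
Qed.

Lemma asc_runs_map_succ v : asc_runs (map succn v) = asc_runs v.
Proof.
elim: v => [|x [|y t] IH] //.
by rewrite !map_cons asc_runs_cons2 -map_cons IH eqSS ltnS asc_runs_cons2.
Qed.

Lemma run_state_map_succ k v : run_state k (map succn v) = run_state k v.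
Proof. by rewrite /run_state asc_runs_map_succ. Qed.

Lemma has321_map_succ v : has321 (map succn v) <-> has321 v.
Proof. by rewrite -!contains_rev_pat123 -map_rev contains_map_succ. Qed.

Lemma has23k1_map_succ k v : 1 < k -> has23k1 k (map succn v) <-> has23k1 k v.
Proof. by move=> Hk; rewrite -!(contains_rev_pat1k _ Hk) -map_rev contains_map_succ. Qed.

Definition valid_word n r k (w : seq nat) : bool :=
  [&& is_word n r w, avoids w pat123 & avoids w (pat1k k)].

Lemma valid_word_rev n r k v : 1 < k ->
  valid_word n r k (rev v) <-> [/\ is_word n r v, ~ has321 v & ~ has23k1 k v].
Proof.
move=> Hk; rewrite /valid_word /avoids (@is_word_perm _ _ _ v) ?perm_rev //.
split => [/and3P [-> /negP N3 /negP Nk] | [-> N3 Nk]].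
  by split => // H; [apply: N3; apply/contains_rev_pat123 | apply: Nk; apply/contains_rev_pat1k].
rewrite /=; apply/andP; split; apply/negP => H.
  by apply: N3; apply/contains_rev_pat123.
by apply: Nk; apply/contains_rev_pat1k.
Qed.

Lemma split_last_occurrence (T : eqType) (x : T) v : x \in v ->
  exists v1 v2, v = v1 ++ x :: v2 /\ x \notin v2.
Proof.
elim: v => [|y t IH] //; rewrite inE; case Ht: (x \in t).
  by move=> _; have [v1 [v2 [-> H]]] := IH Ht; exists (y :: v1), v2.
by case/orP => [/eqP Exy|Hx]; [exists [::], t; rewrite -Exy Ht | rewrite Hx in Ht].
Qed.

Lemma insert1_decomposition v : 1 \in v ->
  exists b, [/\ v = insert1 (filter (predC1 1) v) (count negb b) b,
    count negb b <= size (filter (predC1 1) v) & (count id b).+1 = count_mem 1 v].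
Proof.
case/split_last_occurrence => [v1 [v2 [Ev H2]]].
have Hv2 : all (predC1 1) v2 by apply/allP => x Hx /=; apply: contraNneq H2 => <-.
have Ef : filter (predC1 1) v = filter (predC1 1) v1 ++ v2.
  by rewrite Ev filter_cat /= (all_filterP Hv2).
exists (map (pred1 1) v1).
have -> : count negb (map (pred1 1) v1) = size (filter (predC1 1) v1).
  by rewrite count_map size_filter; apply: eq_count.
rewrite Ef /insert1 take_size_cat // drop_size_cat // interleave1_split -Ev size_cat leq_addr.
by split => //; rewrite Ev count_cat /= (count_memPn H2) count_map addn0 addn1.
Qed.

Lemma last_occurrence_inj (T : eqType) (x : T) p1 q1 p2 q2 : x \notin q1 -> x \notin q2 ->
  p1 ++ x :: q1 = p2 ++ x :: q2 -> p1 = p2.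
Proof.
move=> H1 H2; elim: p1 p2 => [|y p1 IH] [|z p2] //= [Eyz E].
- by move: H1; rewrite E mem_cat inE eqxx orbT.
- by move: H2; rewrite -E Eyz mem_cat inE eqxx orbT.
- by rewrite Eyz (IH _ E).
Qed.

Lemma insert1_inj u1 u2 b1 b2 : all (leq 2) u1 -> all (leq 2) u2 ->
  count negb b1 <= size u1 -> count negb b2 <= size u2 ->
  insert1 u1 (count negb b1) b1 = insert1 u2 (count negb b2) b2 -> u1 = u2 /\ b1 = b2.
Proof.
move=> Hu1 Hu2 HL1 HL2 E.
have Eu : u1 = u2.
  by rewrite -(filter_insert1 Hu1 (erefl _) HL1) E (filter_insert1 Hu2 (erefl _) HL2).
subst u2; split => //.
have Hp := last_occurrence_inj (notin1_drop _ Hu1) (notin1_drop _ Hu1) E.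
have Ht L : all (predC1 1) (take L u1) by apply/all_take/(sub_all _ Hu1) => x /=; lia.
rewrite -(@map_interleave1 b1 (take (count negb b1) u1)) ?size_takel // Hp.
by rewrite map_interleave1 ?size_takel.
Qed.

(** * Enumeration of the reversed valid words *)

Fixpoint seqs_upto (T : eqType) (s : seq T) (j : nat) : seq (seq T) :=
  if j is j'.+1 then [::] :: [seq x :: t | x <- s, t <- seqs_upto s j'] else [:: [::]].

Lemma mem_seqs_upto (T : eqType) (s : seq T) j t :
  (t \in seqs_upto s j) = (size t <= j) && all (mem s) t.
Proof.
elim: j t => [|j IH] [|x t] //=; rewrite in_cons /= ltnS andbCA -IH.
apply/allpairsP/andP => [[[y t'] [Hy Ht' [-> ->]]] | [Hx Ht]] //.
by exists (x, t).
Qed.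

Lemma seqs_upto_uniq (T : eqType) (s : seq T) j : uniq s -> uniq (seqs_upto s j).
Proof.
move=> Hs; elim: j => [|j IH] //=; rewrite allpairs_uniq ?andbT //.
  by apply/negP => /allpairsP [[? ?] [_ _]].
by move=> [? ?] [? ?] _ _ [-> ->].
Qed.

(* The insertion patterns of [r] new ones into a word whose good prefix has
   length [T], the last one going after [count negb b <= T] old letters. *)
Definition insertions (r T : nat) : seq (seq bool) :=
  [seq b <- seqs_upto [:: true; false] (T + r) | (count id b == r.-1) && (count negb b <= T)].

Lemma mem_insertions r T b :
  (b \in insertions r T) = (count id b == r.-1) && (count negb b <= T).
Proof.
rewrite mem_filter mem_seqs_upto (_ : all _ b) ?andbT; last by apply/allP => -[].
case: eqP => //= Hid; apply/andb_idr => HT.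
have := count_predC id b; rewrite Hid (@eq_count _ _ negb) //; lia.
Qed.

Lemma insertions_uniq r T : uniq (insertions r T).
Proof. exact/filter_uniq/seqs_upto_uniq. Qed.

Lemma count_allpairs_dep (S : eqType) (T : S -> eqType) (R : eqType)
    (f : forall x, T x -> R) (s : seq S) (t : forall x, seq (T x)) (P : pred R) :
  count P [seq f x y | x <- s, y <- t x] = \sum_(x <- s) count (fun y => P (f x y)) (t x).
Proof. by elim: s => [|a s IH]; rewrite ?big_nil // big_cons -IH /= count_cat count_map. Qed.

(* [sumn S0] is the good prefix length of any word in state [S0]. *)
Definition transfer (k r : nat) (S0 S : seq nat) : nat :=
  count (fun b => next_state k b S0 == S) (insertions r (sumn S0)).

(* The reversals of the words counted by [c_seq k r n]. *)
Fixpoint valid_rwords (k r n : nat) : seq (seq nat) :=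
  if n is n'.+1 then
    [seq insert1 (map succn vp) (count negb b) b |
       vp <- valid_rwords k r n', b <- insertions r (good_len k vp)]
  else [:: [::]].

Section ValidWords.
Variables (k r : nat).
Hypotheses (Hk : 2 < k) (Hr : 0 < r).
Let Hk1 : 1 < k := ltnW Hk.

Lemma valid_word_insert1 n vp b : valid_word n r k (rev vp) ->
  count id b = r.-1 -> count negb b <= good_len k vp ->
  valid_word n.+1 r k (rev (insert1 (map succn vp) (count negb b) b)).
Proof.
move=> /(valid_word_rev _ _ _ Hk1) [Hw N3 Nk] Hid HL.
have Hu : all (leq 2) (map succn vp) by rewrite all_map; exact: is_word_gt0 Hw.
have HLu : count negb b <= good_len k (map succn vp) by rewrite /good_len run_state_map_succ.
have HLs := leq_trans HLu (good_len_size k _).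
have N3u : ~ has321 (map succn vp) by move/has321_map_succ.
have Nku : ~ has23k1 k (map succn vp) by move/(has23k1_map_succ _ Hk1).
have /andP[Hsort Hund] : good_prefix k (take (count negb b) (map succn vp)).
  by rewrite good_prefix_take.
apply/(valid_word_rev _ _ _ Hk1).
split; [|exact: insert1_avoids321 | exact: insert1_avoids23k1 Hk1 _ _].
by rewrite (is_word_perm _ _ (perm_insert1 (erefl _) HLs)) Hid prednK // is_word_succ.
Qed.

Lemma valid_word_insert1_inv n v : valid_word n.+1 r k (rev v) ->
  exists vp b, [/\ v = insert1 (map succn vp) (count negb b) b, valid_word n r k (rev vp),
    count id b = r.-1 & count negb b <= good_len k vp].
Proof.
move=> /(valid_word_rev _ _ _ Hk1) [Hw N3 Nk].
have Hc1 : count_mem 1 v = r.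
  by case/andP: Hw => _ /allP H; apply/eqP; apply: H; rewrite mem_iota; lia.
have [|b [Ev HLs Hid]] := @insert1_decomposition v; first by rewrite -has_pred1 has_count Hc1.
set u := filter (predC1 1) v in Ev HLs.
have Hu : all (leq 2) u.
  apply/allP => x; rewrite mem_filter => /andP [/= Hx1 /(allP (is_word_gt0 Hw)) Hx].
  by move: Hx1 Hx; rewrite -[2]/(1.+1); lia.
have Eu : map succn (map predn u) = u.
  by rewrite -map_comp; apply: map_id_in => x /(allP Hu) Hx /=; lia.
rewrite -Eu in Ev HLs Hu.
have := insert1_avoids_inv Hu (erefl _) HLs (k := k); rewrite -Ev => /(_ N3 Nk) [N3u Nku Hg].
have := is_word_perm n.+1 r (perm_insert1 (erefl _) HLs).
rewrite -Ev Hid Hc1 is_word_succ // => Hw'.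
exists (map predn u), b; split => //.
- apply/(valid_word_rev _ _ _ Hk1).
  by split; [rewrite -Hw' | move/has321_map_succ | move/(has23k1_map_succ _ Hk1)].
- by rewrite -Hc1 -Hid.
by move: Hg; rewrite good_prefix_take // /good_len run_state_map_succ.
Qed.

Lemma mem_valid_rwords n v : (v \in valid_rwords k r n) = valid_word n r k (rev v).
Proof.
elim: n v => [|n IH] v.
  apply/esym; case: v => [|x v]; rewrite inE /=.
    apply/(valid_word_rev _ _ _ Hk1); split => //.
      by move=> [a [b [c [_ _]]]].
    by move=> [a [zs [_ _ _]]]; rewrite subseq0; case: zs.
  apply/negP => /(valid_word_rev _ _ _ Hk1) [Hw _ _].
  by move: Hw => /andP[/andP[]]; lia.
apply/allpairsPdep/idP => [[vp [b [Hvp Hb ->]]] | /valid_word_insert1_inv].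
  move: Hvp Hb; rewrite IH mem_insertions => Hvp /andP[/eqP Hid HL].
  exact: valid_word_insert1.
move=> [vp [b [-> Hvp Hid HL]]].
by exists vp, b; rewrite IH mem_insertions Hid eqxx HL.
Qed.

Lemma valid_rwords_shift_gt1 n vp : vp \in valid_rwords k r n -> all (leq 2) (map succn vp).
Proof.
rewrite mem_valid_rwords => /(valid_word_rev _ _ _ Hk1) [/is_word_gt0 Hw _ _].
by rewrite all_map.
Qed.

Lemma valid_rwords_uniq n : uniq (valid_rwords k r n).
Proof.
elim: n => [|n IH] //=; apply: allpairs_uniq_dep => // [vp _|]; first exact: insertions_uniq.
move=> [vp1 b1] [vp2 b2] /allpairsPdep [? [? [Hv1 Hb1 E1]]].
move=> /allpairsPdep [? [? [Hv2 Hb2 E2]]] /= E.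
case: E1 => ? ?; case: E2 => ? ?; subst.
have HL vp b : b \in insertions r (good_len k vp) -> count negb b <= size (map succn vp).
  by rewrite mem_insertions size_map => /andP[_ /leq_trans]; apply; exact: good_len_size.
by have [/(inj_map succn_inj) -> ->] := insert1_inj (valid_rwords_shift_gt1 Hv1)
  (valid_rwords_shift_gt1 Hv2) (HL _ _ Hb1) (HL _ _ Hb2) E.
Qed.

Lemma size_valid_rwords n v : v \in valid_rwords k r n -> size v = n * r.
Proof.
elim: n v => [|n IH] v; first by rewrite inE => /eqP ->.
move=> /allpairsPdep [vp [b [Hvp + ->]]]; rewrite mem_insertions => /andP[/eqP Hid HL].
have HLs : count negb b <= size (map succn vp).
  by rewrite size_map; exact: leq_trans HL (good_len_size k vp).
by rewrite (perm_size (perm_insert1 (erefl _) HLs)) size_cat size_nseq size_map IH // Hid prednK.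
Qed.

Lemma c_seq_valid_rwords n : c_seq k r n = size (valid_rwords k r n).
Proof.
rewrite /c_seq cardE -(size_map (fun t : (n * r).-tuple 'I_n.+1 => map (@nat_of_ord _) t)).
rewrite -(size_map rev (valid_rwords k r n)).
apply/perm_size/uniq_perm.
- by rewrite map_inj_uniq ?enum_uniq // => t1 t2 /(inj_map (@ord_inj _)) /val_inj.
- by rewrite map_inj_uniq ?valid_rwords_uniq //; exact: (can_inj revK).
move=> w; rewrite -[w in RHS]revK (mem_map (can_inj revK)) mem_valid_rwords revK.
apply/mapP/idP => [[t]|Hw]; first by rewrite mem_enum => Ht ->.
have Hsz : size (map (@inord n) w) == n * r.
  by rewrite size_map -size_rev (@size_valid_rwords n) // mem_valid_rwords revK.
have Hval : map (@nat_of_ord _) (map (@inord n) w) = w.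
  rewrite -map_comp; apply: map_id_in => x Hx /=; rewrite inordK //.
  by move: Hw => /and3P [/andP[/allP /(_ x Hx) /andP[_ ?] _] _ _].
by exists (Tuple Hsz); rewrite /= ?Hval // mem_enum inE /= Hval.
Qed.

Lemma run_state_valid_insert1 n vp b : vp \in valid_rwords k r n ->
  b \in insertions r (good_len k vp) ->
  run_state k (insert1 (map succn vp) (count negb b) b) = next_state k b (run_state k vp).
Proof.
move=> Hvp; rewrite mem_insertions => /andP[_ HL].
rewrite run_state_insert1 ?(run_state_map_succ k vp) ?(valid_rwords_shift_gt1 Hvp) //.
by rewrite /good_len (run_state_map_succ k vp).
Qed.

Lemma run_state_valid_rwords n v : v \in valid_rwords k r n ->
  run_state k v \in seqs_upto (iota 0 r.+1) (k - 2).
Proof.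
rewrite mem_seqs_upto size_take_min geq_minl /=.
rewrite (@eq_all _ _ (fun a => a <= r)) => [|a]; last by rewrite /= inE mem_iota; lia.
elim: n v => [|n IH] v; first by rewrite inE => /eqP ->.
move=> /allpairsPdep [vp [b [Hvp Hb ->]]].
move: (Hb); rewrite mem_insertions => /andP[/eqP Hid _].
by rewrite (run_state_valid_insert1 Hvp Hb) next_state_bounded // IH.
Qed.

Lemma count_run_state_succ n S :
  count (fun v => run_state k v == S) (valid_rwords k r n.+1) =
  \sum_(vp <- valid_rwords k r n) transfer k r (run_state k vp) S.
Proof.
rewrite count_allpairs_dep !big_seq; apply: eq_bigr => vp Hvp.
by apply: eq_in_count => b Hb /=; rewrite (run_state_valid_insert1 Hvp Hb).
Qed.

End ValidWords.

(** * Transfer matrices and linear recurrences *)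

Import GRing.Theory.
Local Open Scope ring_scope.

Lemma mx_orbit_recurrence (R : comNzRingType) m (A : 'M[R]_m) (v : nat -> 'cV[R]_m)
    (c : nat -> R) :
  (forall n, v n.+1 = A *m v n) -> (forall n, c n = \sum_(i < m) v n i 0) ->
  exists (d : nat) (a : nat -> R), forall n, c (n + d)%N = \sum_(i < d) a i * c (n + i)%N.
Proof.
case: m A v c => [|m] A v c Hv Hc.
  by exists 0%N, (fun _ => 0) => n; rewrite big_ord0 Hc big_ord0.
set p := char_poly A.
have Hsz : size p = m.+2 := size_char_poly A.
have Hlead : p`_m.+1 = 1 by have := monicP (char_poly_monic A); rewrite /lead_coef -/p Hsz.
have Hexp : horner_mx A p = \sum_(i < m.+2) p`_i *: A ^+ i.
  rewrite -{1}[p]coefK poly_def Hsz linear_sum /=; apply: eq_bigr => i _.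
  by rewrite linearZ /= rmorphXn /= horner_mx_X.
have HAd : A ^+ m.+1 = - \sum_(i < m.+1) p`_i *: A ^+ i.
  move: (Cayley_Hamilton A); rewrite -/p Hexp big_ord_recr /= Hlead scale1r => /eqP.
  by rewrite addrC addr_eq0 => /eqP.
have Hvn n i : v (n + i)%N = A ^+ i *m v n.
  elim: i => [|i IH]; first by rewrite addn0 expr0 mul1mx.
  by rewrite addnS Hv IH exprS mulmxA.
exists m.+1, (fun i => - p`_i) => n.
transitivity (\sum_(i < m.+1) - p`_i * \sum_(j < m.+1) (A ^+ i *m v n) j 0).
  rewrite Hc Hvn HAd mulNmx mulmx_suml.
  under eq_bigr do rewrite mxE summxE.
  rewrite sumrN exchange_big /= -sumrN.
  apply: eq_bigr => i _; rewrite mulNr mulr_sumr.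
  by congr (- _); apply: eq_bigr => j _; rewrite -scalemxAl mxE.
by apply: eq_bigr => i _; rewrite Hc Hvn.
Qed.

Lemma sum_by_fibers (I T : eqType) (states : seq T) (g : T -> nat) (st : I -> T)
    (l : seq I) :
  uniq states -> {in l, forall x, st x \in states} ->
  (\sum_(x <- l) g (st x) = \sum_(S <- states) g S * count (fun x => st x == S) l)%N.
Proof.
move=> Hu; elim: l => [|a l IH] Hin; first by rewrite big_nil big1 // => S _; rewrite muln0.
rewrite big_cons IH => [|x Hx]; last by apply: Hin; rewrite inE Hx orbT.
under [in RHS]eq_bigr do rewrite /= mulnDr.
rewrite big_split /=; congr (_ + _)%N.
rewrite (bigD1_seq (st a)) ?Hin ?mem_head //= eqxx muln1 big1 ?addn0 // => S.
by rewrite eq_sym => /negbTE ->; rewrite muln0.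
Qed.

Section TransferMatrix.
Variables (X T : eqType) (words : nat -> seq X) (state : X -> T).
Variables (states : seq T) (F : T -> T -> nat).
Hypothesis state_in : forall n x, x \in words n -> state x \in states.
Hypothesis count_state_succ : forall n S,
  count (fun x => state x == S) (words n.+1) = (\sum_(x <- words n) F (state x) S)%N.

Lemma size_words_recurrence (R : comNzRingType) :
  exists (d : nat) (a : nat -> R), forall n,
    (size (words (n + d)))%:R = \sum_(i < d) a i * (size (words (n + i)))%:R.
Proof.
pose Sg := undup states; pose S_ := tnth (in_tuple Sg).
have state_Sg n x : x \in words n -> state x \in Sg by rewrite mem_undup; apply: state_in.
pose v n : 'cV[R]_(size Sg) := \col_i (count (fun x => state x == S_ i) (words n))%:R.
pose A : 'M[R]_(size Sg) := \matrix_(i, j) (F (S_ j) (S_ i))%:R.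
apply: (@mx_orbit_recurrence _ _ A v (fun n => (size (words n))%:R)) => n.
  apply/matrixP => i j; rewrite !mxE count_state_succ.
  rewrite (sum_by_fibers (fun S => F S (S_ i)) (undup_uniq _) (state_Sg n)).
  rewrite natr_sum big_tnth; apply: eq_bigr => l _.
  by rewrite natrM !mxE.
rewrite -sum1_size (sum_by_fibers (fun _ => 1%N) (undup_uniq _) (state_Sg n)).
rewrite natr_sum big_tnth; apply: eq_bigr => l _.
by rewrite mul1n mxE.
Qed.

End TransferMatrix.

Theorem mainTheorem3 (k r : nat) (hk : (3 <= k)%N) (hr : (1 <= r)%N) :
  exists (d N : nat) (a : nat -> rat),
    forall n : nat, (N <= n)%N ->
      ((c_seq k r (n + d))%:R : rat) = \sum_(i < d) a i * (c_seq k r (n + i))%:R.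
Proof.
have [d [a Ha]] := size_words_recurrence (run_state_valid_rwords hk hr)
  (count_run_state_succ hk hr) rat.
exists d, 0%N, a => n _; rewrite c_seq_valid_rwords // Ha.
by apply: eq_bigr => i _; rewrite c_seq_valid_rwords.
Qed.
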